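(* Let $P$ be a program over a propositional signature $\Sigma$ and $q\in\Sigma$. Then for every program $R$ over $\Sigma\setminus\{q\}$, $\{Y\setminus\{q\}: Y\in AS(P\cup R)\}\subseteq AS(f_{SP}(P,q)\cup R)$.
   Context: A program over $\Sigma$ is a finite set of rules $r$ of the form $a_1\vee\dots\vee a_k\leftarrow b_1,\dots,b_l,\ not\,c_1,\dots,not\,c_m,\ not\,not\,d_1,\dots,not\,not\,d_n$ with atoms in $\Sigma$; write $H(r)=\{a_i\}$, $B^+(r)=\{b_i\}$, $B^-(r)=\{c_i\}$, $B^{--}(r)=\{d_i\}$, $B(r)=B^+(r)\cup\{not\,c: c\in B^-(r)\}\cup\{not\,not\,d:d\in B^{--}(r)\}$ (elements of $B(r)$ are literals); a rule is written $H(r)\leftarrow B(r)$. $\Sigma(r)$, $\Sigma(P)$ are the atoms occurring in $r$, $P$. Reduct: $P^I=\{H(r)\leftarrow B^+(r): r\in P, B^-(r)\cap I=\emptyset, B^{--}(r)\subseteq I\}$. $I$ classically satisfies $r$ if $B^+(r)\subseteq I$, $B^-(r)\cap I=\emptyset$, $B^{--}(r)\subseteq I$ imply $H(r)\cap I\ne\emptyset$. An HT-interpretation $\langle X,Y\rangle$ ($X\subseteq Y$) is an HT-model of $P$ if $Y$ classically satisfies all rules of $P$ and $X$ all rules of $P^Y$; $\mathcal{HT}(P)$ is the set of HT-models with $X,Y\subseteq\Sigma(P)$. $Y$ is an answer set of $P$ if $\langle Y,Y\rangle\in\mathcal{HT}(P)$ and no $X\subsetneq Y$ has $\langle X,Y\rangle\in\mathcal{HT}(P)$;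 $AS(P)$ is the set of answer sets. Normal form: $r$ is tautological if $H(r)\cap B^+(r)\ne\emptyset$ or $B^+(r)\cap B^-(r)\ne\emptyset$ or $B^-(r)\cap B^{--}(r)\ne\emptyset$; $r\in P$ is minimal in $P$ if no $r'\in P$ has ($H(r')\subseteq H(r)$ and $B(r')\subsetneq B(r)$) or ($H(r')\subsetneq H(r)$ and $B(r')\subseteq B(r)$). $NF(P)$ is obtained by: 1. removing tautological rules; 2. removing from $B^{--}(r)$ atoms in $B^+(r)$; 3. removing from $H(r)$ atoms in $B^-(r)$; 4. removing rules not minimal in the resulting program. Notation: for a set $S$ of literals, $not\,(S)=\{not\,s:s\in S\}$, $not\,not\,(S)=\{not\,not\,s:s\in S\}$, simplifying $not\,not\,not\,p=not\,p$ and $not\,not\,not\,not\,p=not\,not\,p$. $B^{\setminus q}(r)=B(r)\setminus\{q,not\,q,not\,not\,q\}$, $H^{\setminus q}(r)=H(r)\setminus\{q\}$. For a set of rules $Q$, $D_q(Q)$ is the set of all sets $not\,(\{l_1,\dots,l_m\})\cup not\,not\,(\{l_{m+1},\dots,l_n\})$ where $\langle\{r_1,\dots,r_m\},\{r_{m+1},\dots,r_n\}\rangle$ is a partition of $Q$ (parts possibly empty), $l_i\in B^{\setminus q}(r_i)$ for $i\le m$, $l_j\in H^{\setminus q}(r_j)$ for $j>m$ (so $D_q(\emptyset)=\{\emptyset\}$). The operator $f_{SP}$: let $P'=NF(P)$, $R=\{r\in P': q\notin\Sigma(r)\}$, $R_0=\{r\in P':q\in B(r)\}$, $R_1=\{r\in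 P': not\,q\in B(r)\}$, $R_2=\{r\in P': not\,not\,q\in B(r), q\notin H(r)\}$, $R_3=\{r\in P': not\,not\,q\in B(r), q\in H(r)\}$, $R_4=\{r\in P': not\,not\,q\notin B(r), q\in H(r)\}$. $P''$ consists of: every $r\in R$; and (1a) for $r_0\in R_0$, $r_4\in R_4$: $H(r_0)\cup H^{\setminus q}(r_4)\leftarrow B^{\setminus q}(r_0)\cup B(r_4)$; (2a) for $r_0\in R_0$, $r_3\in R_3$, $r'\in R_1\cup R_4$: $H(r_0)\cup H^{\setminus q}(r_3)\leftarrow B^{\setminus q}(r_0)\cup B^{\setminus q}(r_3)\cup not\,(H^{\setminus q}(r'))\cup not\,not\,(B^{\setminus q}(r'))$; (3a) for $r_0\in R_0$, $r_3\in R_3$, $h\in H(r_0)$, $D\in D_q((R_0\cup R_2)\setminus\{r_0\})$: $H(r_0)\leftarrow B^{\setminus q}(r_0)\cup\{not\,not\,h\}\cup D\cup B^{\setminus q}(r_3)\cup not\,(H^{\setminus q}(r_3))$; (1b) for $r_2\in R_2$, $r_4\in R_4$: $H(r_2)\leftarrow B^{\setminus q}(r_2)\cup not\,(H^{\setminus q}(r_4))\cup not\,not\,(B(r_4))$; (2b) for $r_2\in R_2$, $r_3\in R_3$, $r'\in R_1\cup R_4$: $H(r_2)\leftarrow B^{\setminus q}(r_2)\cup not\,(H^{\setminus q}(r_3)\cup H^{\setminus q}(r'))\cup not\,not\,(B^{\setminus q}(r_3)\cup B^{\setminus q}(r'))$; (3b) for $r_2\in R_2$, $r_3\in R_3$,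 $h\in H(r_2)$, $D\in D_q((R_0\cup R_2)\setminus\{r_2\})$: $H(r_2)\leftarrow B^{\setminus q}(r_2)\cup not\,(H^{\setminus q}(r_3))\cup not\,not\,(B^{\setminus q}(r_3)\cup\{h\})\cup D$; (4) for $r'\in R_1\cup R_4$, $D\in D_q(R_3\cup R_4)$ with $D\cap not\,(B^{\setminus q}(r'))=\emptyset$: $H^{\setminus q}(r')\leftarrow B^{\setminus q}(r')\cup D$; (5) for $r'\in R_1\cup R_4$, $r_3\in R_3$, $r\in R_0\cup R_2$, $D\in D_q(R_4)$ with $D\cap not\,(B^{\setminus q}(r'))=\emptyset$: $H^{\setminus q}(r')\leftarrow B^{\setminus q}(r')\cup not\,(H(r)\cup H^{\setminus q}(r_3))\cup not\,not\,(B^{\setminus q}(r)\cup B^{\setminus q}(r_3))\cup D$; (6) for $r'\in R_1\cup R_4$, $r_3\in R_3$, $h\in H^{\setminus q}(r')$, $D\in D_q((R_1\cup R_4)\setminus\{r'\})$: $H^{\setminus q}(r')\leftarrow B^{\setminus q}(r')\cup not\,(H^{\setminus q}(r_3))\cup not\,not\,(B^{\setminus q}(r_3)\cup\{h\})\cup D$; (7) for $r_0\in R_0$, $r_3,r_3'\in R_3$ with $r_3\ne r_3'$, $D\in D_q((R_0\cup R_2)\setminus\{r_0\})$, $h\in H(r_0)$: $H(r_0)\cup H^{\setminus q}(r_3)\leftarrow B^{\setminus q}(r_0)\cup B^{\setminus q}(r_3)\cup not\,(H^{\setminus q}(r_3'))\cup not\,not\,(B^{\setminus q}(r_3')\cup\{h\})\cup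 D$. Then $f_{SP}(P,q)=NF(P'')$. *)

From HB Require Import structures.
From mathcomp Require Import all_boot.

Set Implicit Arguments.
Unset Strict Implicit.
Unset Printing Implicit Defensive.

(* A literal is  b  (Pos b),  not c  (Neg c)  or  not not d  (NN d);
   literals are encoded as A + A + A.
   A rule  H(r) <- B(r)  is a pair (head : set of atoms, body : set of literals). *)

Notation lit A := (A + A + A)%type.
Notation rule A := ({set A} * {set (A + A + A)%type})%type.

Section ASP.
Variable A : finType.

Definition Pos (a : A) : lit A := inl (inl a).
Definition Neg (a : A) : lit A := inl (inr a).
Definition NN  (a : A) : lit A := inr a.

Definition atom_of (l : lit A) : A :=
  match l with inl (inl a) => a | inl (inr a) => a | inr a => a end.

Definition H (r : rule A) : {set A} := r.1.
Definition B (r : rule A) : {set lit A} := r.2.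
Definition Bpos (r : rule A) : {set A} := [set a | Pos a \in B r].
Definition Bneg (r : rule A) : {set A} := [set a | Neg a \in B r].
Definition Bnn  (r : rule A) : {set A} := [set a | NN a \in B r].

Definition sig_rule (r : rule A) : {set A} := H r :|: atom_of @: B r.
Definition sig_prog (P : {set rule A}) : {set A} := \bigcup_(r in P) sig_rule r.

Definition sat (I : {set A}) (r : rule A) : bool :=
  [&& Bpos r \subset I, Bneg r :&: I == set0 & Bnn r \subset I] ==> (H r :&: I != set0).
Definition satP (I : {set A}) (P : {set rule A}) : bool := [forall r in P, sat I r].

Definition reduct (P : {set rule A}) (I : {set A}) : {set rule A} :=
  [set ((H r, Pos @: Bpos r) : rule A) | r in P & (Bneg r :&: I == set0) && (Bnn r \subset I)].

Definition HTmodel (P : {set rule A}) (X Y : {set A}) : bool :=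
  [&& X \subset Y, X \subset sig_prog P, Y \subset sig_prog P,
      satP Y P & satP X (reduct P Y)].

Definition answer_set (P : {set rule A}) (Y : {set A}) : bool :=
  HTmodel P Y Y && ~~ [exists X : {set A}, (X \proper Y) && HTmodel P X Y].

Definition tautological (r : rule A) : bool :=
  [|| H r :&: Bpos r != set0, Bpos r :&: Bneg r != set0 | Bneg r :&: Bnn r != set0].

Definition nf_step23 (r : rule A) : rule A :=
  (H r :\: Bneg r, B r :\: (NN @: Bpos r)).

Definition minimal_in (P : {set rule A}) (r : rule A) : bool :=
  ~~ [exists r' in P,
        ((H r' \subset H r) && (B r' \proper B r)) ||
        ((H r' \proper H r) && (B r' \subset B r))].

Definition NF (P : {set rule A}) : {set rule A} :=
  let P1 := [set r in P | ~~ tautological r] in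
  let P2 := nf_step23 @: P1 in
  [set r in P2 | minimal_in P2 r].

(* not l, simplifying  not not not p = not p *)
Definition notl (l : lit A) : lit A :=
  match l with inl (inl a) => Neg a | inl (inr a) => NN a | inr a => Neg a end.
(* not not l, simplifying  not not not p = not p, not not not not p = not not p *)
Definition nnl (l : lit A) : lit A :=
  match l with inl (inl a) => NN a | inl (inr a) => Neg a | inr a => NN a end.

Definition notS (S : {set lit A}) : {set lit A} := notl @: S.
Definition nnS (S : {set lit A}) : {set lit A} := nnl @: S.
Definition notA (S : {set A}) : {set lit A} := Neg @: S.
Definition nnA (S : {set A}) : {set lit A} := NN @: S.

Variable q : A.

Definition Bq (r : rule A) : {set lit A} := [set l in B r | atom_of l != q].
Definition Hq (r : rule A) : {set A} := H r :\ q.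

(* D_q(Q): for each rule r of Q one chooses either  not l  with l in B^{\q}(r)
   (r in the first part of the partition) or  not not h  with h in H^{\q}(r)
   (r in the second part); D is the set of chosen literals. *)
Definition Dq (Q : {set rule A}) : {set {set lit A}} :=
  [set D | [exists f : {ffun rule A -> lit A},
             [forall r in Q, (f r \in notS (Bq r)) || (f r \in nnA (Hq r))]
             && (D == f @: Q)]].

Section fSP.
Variable P : {set rule A}.
Let P' := NF P.
Let R  := [set r in P' | q \notin sig_rule r].
Let R0 := [set r in P' | Pos q \in B r].
Let R1 := [set r in P' | Neg q \in B r].
Let R2 := [set r in P' | (NN q \in B r) && (q \notin H r)].
Let R3 := [set r in P' | (NN q \in B r) && (q \in H r)].
Let R4 := [set r in P' | (NN q \notin B r) && (q \in H r)].
Let R14 := R1 :|: R4.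
Let R02 := R0 :|: R2.

Definition Ppp_mem (x : rule A) : bool :=
  [|| x \in R,
  [exists r0 in R0, exists r4 in R4,
     x == (H r0 :|: Hq r4, Bq r0 :|: B r4)],
  [exists r0 in R0, exists r3 in R3, exists r' in R14,
     x == (H r0 :|: Hq r3, Bq r0 :|: Bq r3 :|: notA (Hq r') :|: nnS (Bq r'))],
  [exists r0 in R0, exists r3 in R3, exists h in H r0, exists D in Dq (R02 :\ r0),
     x == (H r0, Bq r0 :|: [set NN h] :|: D :|: Bq r3 :|: notA (Hq r3))],
  [exists r2 in R2, exists r4 in R4,
     x == (H r2, Bq r2 :|: notA (Hq r4) :|: nnS (B r4))],
  [exists r2 in R2, exists r3 in R3, exists r' in R14,
     x == (H r2, Bq r2 :|: notA (Hq r3 :|: Hq r') :|: nnS (Bq r3 :|: Bq r'))],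
  [exists r2 in R2, exists r3 in R3, exists h in H r2, exists D in Dq (R02 :\ r2),
     x == (H r2, Bq r2 :|: notA (Hq r3) :|: nnS (Bq r3 :|: [set Pos h]) :|: D)],
  [exists r' in R14, exists D in Dq (R3 :|: R4),
     (D :&: notS (Bq r') == set0) && (x == (Hq r', Bq r' :|: D))],
  [exists r' in R14, exists r3 in R3, exists r in R02, exists D in Dq R4,
     (D :&: notS (Bq r') == set0) &&
     (x == (Hq r', Bq r' :|: notA (H r :|: Hq r3) :|: nnS (Bq r :|: Bq r3) :|: D))],
  [exists r' in R14, exists r3 in R3, exists h in Hq r', exists D in Dq (R14 :\ r'),
     x == (Hq r', Bq r' :|: notA (Hq r3) :|: nnS (Bq r3 :|: [set Pos h]) :|: D)]
  |
  [exists r0 in R0, exists r3 in R3, exists r3' in R3, exists D in Dq (R02 :\ r0),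
   exists h in H r0,
     (r3 != r3') &&
     (x == (H r0 :|: Hq r3,
            Bq r0 :|: Bq r3 :|: notA (Hq r3') :|: nnS (Bq r3' :|: [set Pos h]) :|: D))]].

Definition Ppp : {set rule A} := [set x | Ppp_mem x].
End fSP.

Definition fSP (P : {set rule A}) : {set rule A} := NF (Ppp P).

End ASP.

(* f_SP(P,q) with the paper's argument order *)
Definition f_SP (A : finType) (P : {set rule A}) (q : A) : {set rule A} := fSP q P.

From HB Require Import structures.
From mathcomp Require Import all_boot.

Set Implicit Arguments.
Unset Strict Implicit.
Unset Printing Implicit Defensive.

(* Y is an answer set of Q iff Y classically satisfies Q and every X ⊊ Y violates, at
   ⟨X,Y⟩, the reduct of some rule of Q (answer_setP); both properties pass from P to NF P.
   Write Y' = Y \ {q}.  Every rule of f_SP(P,q) holds in Y': either its body contains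
   [not not h] for a head atom h, or its body, read in Y, makes a rule of NF P fire with a
   head atom other than q, or it contradicts the rule that supports q in Y.  For
   minimality, take X ⊊ Y'.  The minimality of Y, applied to X and (when q ∈ Y) to X ∪ {q},
   yields violated rules of NF P mentioning q; according to their classes R0-R4 and to the
   class of the rule supporting q, they combine into a rule of one of the shapes (1a)-(7)
   violated at ⟨X,Y'⟩, the sets D being chosen true in Y'. *)

Lemma disjointsU (T : finType) (A1 A2 C : {set T}) :
  [disjoint A1 :|: A2 & C] = [disjoint A1 & C] && [disjoint A2 & C].
Proof. by rewrite -!setI_eq0 setIUl setU_eq0. Qed.

Lemma disjointD1r (T : finType) (S X : {set T}) x :
  x \notin S -> [disjoint S & X :\ x] = [disjoint S & X].
Proof.
move=> xS; rewrite -!setI_eq0 setIDA; congr (_ == _); apply/setDidPl.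
by rewrite disjoint_sym disjoints1 inE negb_and xS.
Qed.

Lemma not_disjointP (T : finType) (S X : {set T}) :
  reflect (exists2 a, a \in S & a \in X) (~~ [disjoint S & X]).
Proof.
rewrite -setI_eq0; apply: (iffP (set0Pn _)) => [[a /setIP[]] | [a aS aX]]; first by exists a.
by exists a; rewrite inE aS aX.
Qed.

Lemma setD1_id (T : finType) (X : {set T}) x : x \notin X -> X :\ x = X.
Proof. by move=> xX; apply/setDidPl; rewrite disjoint_sym disjoints1. Qed.

Section HTSemantics.
Variable A : finType.
Implicit Types (X Y I : {set A}) (r : rule A) (l : lit A) (S : {set lit A}) (P Q : {set rule A}).

(* ⟨X,Y⟩ ⊨ l in the logic of here-and-there; [ht_lit_sat Y Y] is classical truth in Y. *)
Definition ht_lit_sat X Y l : bool :=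
  match l with inl (inl a) => a \in X | inl (inr a) => a \notin Y | inr a => a \in Y end.

Definition body_sat X Y S : bool := [forall l in S, ht_lit_sat X Y l].

(* [X] falsifies the rule that [r] contributes to the reduct [P^Y]. *)
Definition violates X Y r : bool := body_sat X Y (B r) && [disjoint H r & X].

Lemma body_satP X Y S : reflect {in S, forall l, ht_lit_sat X Y l} (body_sat X Y S).
Proof. exact: forall_inP. Qed.

Lemma body_satS X Y S1 S2 : S1 \subset S2 -> body_sat X Y S2 -> body_sat X Y S1.
Proof. by move=> /subsetP sub /body_satP sat2; apply/body_satP => l /sub /sat2. Qed.

Lemma body_satU X Y S1 S2 :
  body_sat X Y (S1 :|: S2) = body_sat X Y S1 && body_sat X Y S2.
Proof.
apply/idP/andP => [sat12 | [/body_satP sat1 /body_satP sat2]].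
  by split; apply: body_satS sat12; rewrite ?subsetUl ?subsetUr.
by apply/body_satP => l /setUP[/sat1 | /sat2].
Qed.

Lemma body_sat1 X Y l : body_sat X Y [set l] = ht_lit_sat X Y l.
Proof. by apply/body_satP/idP => [-> | sat_l l' /set1P ->]; rewrite ?set11. Qed.

Lemma ht_lit_sat_notl X Y l : ht_lit_sat X Y (notl l) = ~~ ht_lit_sat Y Y l.
Proof. by case: l => [[a|a]|a] //=; rewrite negbK. Qed.

Lemma ht_lit_sat_nnl X Y l : ht_lit_sat X Y (nnl l) = ht_lit_sat Y Y l.
Proof. by case: l => [[a|a]|a]. Qed.

Lemma body_sat_notA X Y (S : {set A}) : body_sat X Y (notA S) = [disjoint S & Y].
Proof.
apply/body_satP/pred0P => [sat_S a /= | disj _ /imsetP[a aS ->] /=].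
  by apply/andP => -[aS aY]; move: (sat_S _ (imset_f (@Neg A) aS)); rewrite /= aY.
by move/(_ a): disj; rewrite /= aS => /negbT.
Qed.

Lemma body_sat_nnS X Y S : body_sat X Y (nnS S) = body_sat Y Y S.
Proof.
apply/body_satP/body_satP => [sat_S l lS | sat_S _ /imsetP[l lS ->]].
  by rewrite -(ht_lit_sat_nnl X); apply: sat_S (imset_f _ lS).
by rewrite ht_lit_sat_nnl; apply: sat_S.
Qed.

Lemma ht_lit_satW X Y l : X \subset Y -> ht_lit_sat X Y l -> ht_lit_sat Y Y l.
Proof. by case: l => [[a|a]|a] //= /subsetP; apply. Qed.

Lemma body_satW X Y S : X \subset Y -> body_sat X Y S -> body_sat Y Y S.
Proof. by move=> XY /body_satP sat_S; apply/body_satP => l /sat_S /(ht_lit_satW XY). Qed.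

Lemma body_sat_Pos X Y (S : {set A}) : body_sat X Y (@Pos A @: S) = (S \subset X).
Proof.
apply/body_satP/subsetP => [sat_S a aS | sub_X _ /imsetP[a aS ->]]; last exact: sub_X.
exact: (sat_S _ (imset_f (@Pos A) aS)).
Qed.

Lemma body_satE X Y r :
  body_sat X Y (B r) = [&& Bpos r \subset X, Bneg r :&: Y == set0 & Bnn r \subset Y].
Proof.
rewrite setI_eq0; apply/body_satP/and3P => [sat_B | [/subsetP pos /pred0P neg /subsetP nn]].
  split; first by apply/subsetP => a; rewrite inE => /sat_B.
    by apply/pred0P => a /=; rewrite inE; apply/andP => -[/sat_B /= /negbTE ->].
  by apply/subsetP => a; rewrite inE => /sat_B.
case=> [[a|a]|a] lB /=; first by apply: pos; rewrite inE.
  by move/(_ a): neg; rewrite /= inE lB => /negbT.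
by apply: nn; rewrite inE.
Qed.

Lemma satE I r : sat I r = body_sat I I (B r) ==> ~~ [disjoint H r & I].
Proof. by rewrite /sat body_satE -setI_eq0. Qed.

Lemma reduct_satPn X Y P :
  reflect (exists2 r, r \in P & violates X Y r) (~~ satP X (reduct P Y)).
Proof.
have red_sat r : sat X (H r, @Pos A @: Bpos r) = (Bpos r \subset X) ==> ~~ [disjoint H r & X].
  by rewrite satE /B /H /= body_sat_Pos.
apply: (iffP forall_inPn) => [[_ /imsetP[r + ->]] | [r rP]].
  rewrite inE red_sat negb_imply negbK => /andP[rP /andP[neg nn]] /andP[pos disj].
  by exists r; rewrite // /violates body_satE pos neg nn disj.
rewrite /violates body_satE => /andP[/and3P[pos neg nn] disj].
exists (H r, @Pos A @: Bpos r); first by apply/imsetP; exists r; rewrite // inE rP neg.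
by rewrite red_sat pos disj.
Qed.

Lemma satPU I P Q : satP I (P :|: Q) = satP I P && satP I Q.
Proof.
apply/forall_inP/andP => [satPQ | [/forall_inP satP_I /forall_inP satQ_I] r].
  by split; apply/forall_inP => r rS; apply: satPQ; rewrite in_setU rS ?orbT.
by case/setUP => [/satP_I | /satQ_I].
Qed.

Lemma violates_sat X Y r :
  X \subset Y -> violates X Y r -> sat Y r -> exists2 a, a \in H r & a \in Y :\: X.
Proof.
move=> XY /andP[satX disj]; rewrite satE (body_satW XY satX) -setI_eq0.
by case/set0Pn => a /setIP[aH aY]; exists a; rewrite // inE aY (disjointFr disj aH).
Qed.

Lemma violates_subrule X Y r r' :
  H r' \subset H r -> B r' \subset B r -> violates X Y r -> violates X Y r'.
Proof.
by move=> sH sB /andP[sat_B disj]; rewrite /violates (body_satS sB sat_B) (disjointWl sH disj).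
Qed.

Definition reduct_minimal Q Y :=
  forall X, X \proper Y -> exists2 r, r \in Q & violates X Y r.

Lemma reduct_minimal_sub_sig Q Y : satP Y Q -> reduct_minimal Q Y -> Y \subset sig_prog Q.
Proof.
move=> /forall_inP YQ min; apply/subsetP => a aY; apply/negPn/negP => aQ.
have ZY : Y :&: sig_prog Q \proper Y.
  by apply/properP; split; [exact: subsetIl | exists a; rewrite // inE (negbTE aQ) andbF].
case: (min _ ZY) => r rQ viol; case: (violates_sat (subsetIl _ _) viol (YQ r rQ)) => h hH.
have hQ : h \in sig_prog Q by apply/bigcupP; exists r; rewrite // inE hH.
by rewrite !inE hQ andbT => /andP[/negP].
Qed.

Lemma answer_setP Q Y : answer_set Q Y <-> satP Y Q /\ reduct_minimal Q Y.
Proof.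
split=> [/andP[/and5P[_ Ysig _ YQ _] /existsPn nex] | [YQ min]].
  split=> // X XY; apply/reduct_satPn; apply: contra (nex X) => red.
  by rewrite XY /HTmodel (proper_sub XY) (subset_trans (proper_sub XY) Ysig) Ysig YQ.
rewrite /answer_set /HTmodel subxx (reduct_minimal_sub_sig YQ min) YQ; apply/andP; split.
  apply/negPn/reduct_satPn => -[r rQ viol].
  by case: (violates_sat (subxx Y) viol (forall_inP YQ r rQ)) => a _; rewrite setDv inE.
apply/existsPn => X; apply/negP => /andP[XY /and5P[_ _ _ _ red]].
by case: (min X XY) => r rQ viol; move: red; apply/negP/reduct_satPn; exists r.
Qed.

Lemma body_sat_notS_disjoint I D S : body_sat I I D -> body_sat I I S -> D :&: notS S == set0.
Proof.
move=> /body_satP satD /body_satP satS; rewrite setI_eq0; apply/pred0P => l /=.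
apply/andP => -[lD /imsetP[l' /satS satl' el]].
by move: (satD l lD); rewrite el ht_lit_sat_notl satl'.
Qed.

Lemma sat_NN_head I x h : h \in H x -> NN h \in B x -> sat I x.
Proof.
move=> hH hB; rewrite satE; apply/implyP => /body_satP /(_ _ hB) /= hI.
by rewrite -setI_eq0; apply/set0Pn; exists h; rewrite inE hH hI.
Qed.

Lemma NN_in_nnS a S : Pos a \in S -> NN a \in nnS S.
Proof. exact: (imset_f (@nnl A)). Qed.

End HTSemantics.

Section NormalForm.
Variable A : finType.
Implicit Types (X Y I : {set A}) (r : rule A) (P Q : {set rule A}).

Lemma Pos_notin_NN a (S : {set A}) : (Pos a \in @NN A @: S) = false.
Proof. by apply/imsetP => -[]. Qed.

Lemma Neg_notin_NN a (S : {set A}) : (Neg a \in @NN A @: S) = false.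
Proof. by apply/imsetP => -[]. Qed.

Lemma NF_mem P r :
  r \in NF P -> exists2 r0, r0 \in P & ~~ tautological r0 /\ r = nf_step23 r0.
Proof. by rewrite inE => /andP[/imsetP[r0]]; rewrite inE => /andP[r0P nt] -> _; exists r0. Qed.

Lemma sat_nf_step23 I r : sat I r -> sat I (nf_step23 r).
Proof.
rewrite !satE => /implyP sat_r; apply/implyP => /body_satP sat_nf.
have sat_B : body_sat I I (B r).
  apply/body_satP => l lB; case: (boolP (l \in @NN A @: Bpos r)) => [/imsetP[a + ->] | lnf].
    by rewrite inE => aB; apply: (sat_nf (Pos a)); rewrite inE aB Pos_notin_NN.
  by apply: sat_nf; rewrite inE lnf lB.
move: (sat_r sat_B); rewrite -!setI_eq0 => /set0Pn[h /setIP[hH hI]].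
apply/set0Pn; exists h; rewrite !inE hH hI !andbT; apply/negP => hB.
have: Neg h \in B (nf_step23 r) by rewrite inE hB Neg_notin_NN.
by move/sat_nf; rewrite /= hI.
Qed.

Lemma satP_NF I P : satP I P -> satP I (NF P).
Proof.
by move=> /forall_inP satI; apply/forall_inP => _ /NF_mem[r rP [_ ->]]; apply/sat_nf_step23/satI.
Qed.

Lemma nontautological_disjoint r : ~~ tautological r =
  [&& [disjoint H r & Bpos r], [disjoint Bpos r & Bneg r] & [disjoint Bneg r & Bnn r]].
Proof. by rewrite /tautological !negb_or !negbK !setI_eq0. Qed.

Lemma NF_nontautological P r : r \in NF P -> ~~ tautological r.
Proof.
case/NF_mem => r0 _ [+ ->]; rewrite !nontautological_disjoint => /and3P[d1 d2 d3].
have Bpos_eq : Bpos (nf_step23 r0) = Bpos r0.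
  by apply/setP => a; rewrite !inE Pos_notin_NN.
have Bneg_eq : Bneg (nf_step23 r0) = Bneg r0.
  by apply/setP => a; rewrite !inE Neg_notin_NN.
have Bnn_sub : Bnn (nf_step23 r0) \subset Bnn r0.
  by apply/subsetP => a; rewrite !inE => /andP[].
rewrite Bpos_eq Bneg_eq d2 (disjointWl (subsetDl _ _) d1).
exact: disjointWr Bnn_sub d3.
Qed.

Lemma nontautological_lits r a : ~~ tautological r ->
  [/\ a \in H r -> Pos a \notin B r, Pos a \in B r -> Neg a \notin B r
    & NN a \in B r -> Neg a \notin B r].
Proof.
rewrite nontautological_disjoint => /and3P[d1 d2 d3].
split=> [aH | aB | aB]; apply/negP => aB'.
- by move: (disjointFr d1 aH); rewrite inE aB'.
- have aP : a \in Bpos r by rewrite inE.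
  by move: (disjointFr d2 aP); rewrite inE aB'.
- have aN : a \in Bneg r by rewrite inE.
  by move: (disjointFr d3 aN); rewrite inE aB.
Qed.

Lemma violates_nontautological X Y r : X \subset Y -> violates X Y r -> ~~ tautological r.
Proof.
rewrite /violates body_satE setI_eq0 nontautological_disjoint.
move=> XY /andP[/and3P[pos neg nn] disj]; apply/and3P; split.
- exact: disjointWr pos disj.
- by rewrite disjoint_sym; apply: disjointWr (subset_trans pos XY) neg.
- exact: disjointWr nn neg.
Qed.

Lemma violates_minimal_in X Y Q r : r \in Q -> violates X Y r ->
  exists2 r', r' \in Q & minimal_in Q r' && violates X Y r'.
Proof.
move=> rQ viol; pose rule_size (x : rule A) := #|H x| + #|B x|.
have rP : [pred x | (x \in Q) && violates X Y x] r by rewrite /= rQ.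
case: (arg_minnP rule_size rP) => x /andP[xQ xviol] xmin.
exists x; rewrite // xviol andbT; apply/exists_inPn => y yQ; apply/negP => smaller.
have [sH sB lt_yx] : [/\ H y \subset H x, B y \subset B x & rule_size y < rule_size x].
  case/orP: smaller => /andP[sH sB]; split; rewrite ?(proper_sub sH) ?(proper_sub sB) //=.
    by rewrite /rule_size /= -addnS leq_add ?subset_leq_card ?proper_card.
  by rewrite /rule_size /= -addSn leq_add ?subset_leq_card ?proper_card.
by move: (xmin y); rewrite /= yQ (violates_subrule sH sB xviol) leqNgt lt_yx => /(_ isT).
Qed.

Lemma violates_NF X Y P r : X \subset Y -> r \in P -> violates X Y r ->
  exists2 r', r' \in NF P & violates X Y r'.
Proof.
move=> XY rP viol; set P2 := @nf_step23 A @: [set r in P | ~~ tautological r].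
have r2P2 : nf_step23 r \in P2.
  by apply: imset_f; rewrite inE rP (violates_nontautological XY viol).
have viol2 : violates X Y (nf_step23 r) by apply: violates_subrule viol; apply: subsetDl.
case: (violates_minimal_in r2P2 viol2) => r' r'P2 /andP[min viol'].
by exists r' => //; rewrite inE -/P2 r'P2.
Qed.

Lemma satP_NFU I P Q : satP I (P :|: Q) -> satP I (NF P :|: Q).
Proof. by rewrite !satPU => /andP[/satP_NF -> ->]. Qed.

Lemma reduct_minimal_NF P Q Y : reduct_minimal (P :|: Q) Y -> reduct_minimal (NF P :|: Q) Y.
Proof.
move=> min X XY; have [r /setUP[rP | rQ] viol] := min X XY.
  have [r' r'P viol'] := violates_NF (proper_sub XY) rP viol.
  by exists r'; rewrite ?in_setU ?r'P.
by exists r; rewrite ?in_setU ?rQ ?orbT.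
Qed.

End NormalForm.

Section Forgetting.
Variables (A : finType) (q : A).
Implicit Types (X Y I : {set A}) (r : rule A) (l : lit A) (S : {set lit A}) (Q : {set rule A}).

Lemma Bq_sub r : Bq q r \subset B r.
Proof. by apply/subsetP => l; rewrite inE => /andP[]. Qed.

Lemma body_sat_D1 X Y S :
  {in S, forall l, atom_of l != q} -> body_sat (X :\ q) (Y :\ q) S = body_sat X Y S.
Proof. by move=> Sq; apply: eq_forallb_in => -[[a|a]|a] /Sq /= aq; rewrite !inE aq. Qed.

Lemma body_sat_Bq_D1 X Y r : body_sat (X :\ q) (Y :\ q) (Bq q r) = body_sat X Y (Bq q r).
Proof. by apply: body_sat_D1 => l; rewrite inE => /andP[]. Qed.

Lemma body_sat_forget X Y r : body_sat X Y (B r) -> body_sat (X :\ q) (Y :\ q) (Bq q r).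
Proof. by rewrite body_sat_Bq_D1; apply: body_satS; apply: Bq_sub. Qed.

Definition forget_rule r : rule A := (Hq q r, Bq q r).

Lemma violates_forget X Y r : violates X Y r -> violates (X :\ q) (Y :\ q) (forget_rule r).
Proof.
case/andP => sat_B disj; rewrite /violates /B /H /= body_sat_forget //=.
by apply: disjointW disj; [apply: subD1set | apply: subD1set].
Qed.

Lemma sig_rule_q r : q \in sig_rule r ->
  [\/ q \in H r, Pos q \in B r, Neg q \in B r | NN q \in B r].
Proof.
case/setUP => [| /imsetP[[[a|a]|a] aB /= ->]];
  [by constructor 1 | by constructor 2 | by constructor 3 | by constructor 4].
Qed.

Lemma q_notin_Hq r : q \notin Hq q r.
Proof. by rewrite !inE eqxx. Qed.

Lemma disjoint_Hq r X : q \notin X -> [disjoint Hq q r & X] = [disjoint H r & X].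
Proof.
move=> qX; rewrite -!setI_eq0 setIDAC; congr (_ == _); apply/setDidPl.
by rewrite disjoint_sym disjoints1 inE negb_and qX orbT.
Qed.

Lemma q_free_rule r : q \notin sig_rule r -> Bq q r = B r /\ Hq q r = H r.
Proof.
rewrite inE negb_or => /andP[qH qB]; split; apply/setP => x; rewrite !inE.
  by case: (boolP (x \in B r)) => //= xB; apply: contraNneq qB => <-; apply: imset_f.
by case: eqVneq => // ->; rewrite (negbTE qH).
Qed.

Lemma sat_D1 Y r : q \notin sig_rule r -> sat Y r -> sat (Y :\ q) r.
Proof.
by move=> /q_free_rule[eB eH]; rewrite !satE -eB -eH body_sat_Bq_D1 disjointD1r // q_notin_Hq.
Qed.

Lemma violates_D1 X Y r : q \notin sig_rule r -> violates (X :\ q) (Y :\ q) r = violates X Y r.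
Proof.
by move=> /q_free_rule[eB eH]; rewrite /violates -eB -eH body_sat_Bq_D1 disjointD1r // q_notin_Hq.
Qed.

Lemma body_sat_Bq_in I r :
  q \in I -> Neg q \notin B r -> body_sat I I (Bq q r) -> body_sat I I (B r).
Proof.
move=> qI nNeg /body_satP satBq; apply/body_satP => l lB.
case: (eqVneq (atom_of l) q) => [|lq]; last by apply: satBq; rewrite inE lB lq.
by case: l lB => [[a|a]|a] lB /= aq; subst a; [exact: qI | rewrite lB in nNeg | exact: qI].
Qed.

Lemma body_sat_Bq_out I r : q \notin I -> Pos q \notin B r -> NN q \notin B r ->
  body_sat I I (Bq q r) -> body_sat I I (B r).
Proof.
move=> qI nPos nNN /body_satP satBq; apply/body_satP => l lB.
case: (eqVneq (atom_of l) q) => [|lq]; last by apply: satBq; rewrite inE lB lq.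
by case: l lB => [[a|a]|a] lB /= aq; subst a; [rewrite lB in nPos | exact: qI | rewrite lB in nNN].
Qed.

Lemma Dq_body_sat X Y Q D : D \in Dq q Q -> body_sat X Y D = body_sat Y Y D.
Proof.
rewrite inE => /existsP[f /andP[/forall_inP fQ /eqP->]].
apply: eq_forallb_in => _ /imsetP[r rQ ->].
by case/orP: (fQ r rQ) => /imsetP[x _ ->] //; case: x => [[]|].
Qed.

Lemma Dq_falsified I Q t D : t \in Q -> body_sat I I (Bq q t) -> [disjoint Hq q t & I] ->
  D \in Dq q Q -> ~~ body_sat I I D.
Proof.
move=> tQ /body_satP satBt disj; rewrite inE => /existsP[f /andP[/forall_inP fQ /eqP->]].
apply/body_satP => /(_ (f t) (imset_f f tQ)).
case/orP: (fQ t tQ) => /imsetP[x xt ->]; first by rewrite ht_lit_sat_notl satBt.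
by rewrite /= (disjointFr disj xt).
Qed.

Lemma Dq_satisfiable I Q :
  (forall r, r \in Q -> ~~ body_sat I I (Bq q r) || ~~ [disjoint Hq q r & I]) ->
  exists2 D, D \in Dq q Q & body_sat I I D.
Proof.
move=> falsified.
pose g r := if [pick l in Bq q r | ~~ ht_lit_sat I I l] is Some l then notl l
            else if [pick a in Hq q r | a \in I] is Some a then NN a else NN q.
have gP r : r \in Q ->
    ((g r \in notS (Bq q r)) || (g r \in nnA (Hq q r))) && ht_lit_sat I I (g r).
  move=> rQ; rewrite /g; case: pickP => [l /andP[lB unsat] | noB].
    by rewrite ht_lit_sat_notl unsat imset_f.
  case: pickP => [a /andP[aH aI] | noH]; first by rewrite /= aI imset_f ?orbT.
  case/orP: (falsified r rQ) => [/forall_inPn[l lB unsat] | ].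
    by move: (noB l); rewrite lB unsat.
  by rewrite -setI_eq0 => /set0Pn[a /setIP[aH aI]]; move: (noH a); rewrite aH aI.
exists ([ffun r => g r] @: Q).
  rewrite inE; apply/existsP; exists [ffun r => g r]; rewrite eqxx andbT.
  by apply/forall_inP => r rQ; rewrite ffunE; case/andP: (gP r rQ).
by apply/body_satP => _ /imsetP[r rQ ->]; rewrite ffunE; case/andP: (gP r rQ).
Qed.

End Forgetting.

Section ForgettingAnswerSet.
Variables (A : finType) (q : A) (P R : {set rule A}) (Y : {set A}).
Hypothesis Y_model : satP Y (NF P :|: R).
Hypothesis Y_minimal : reduct_minimal (NF P :|: R) Y.
Hypothesis R_q_free : {in R, forall r, q \notin sig_rule r}.
Implicit Types (X Z : {set A}) (r : rule A).

Local Notation Y' := (Y :\ q).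
Local Notation R0 := [set r in NF P | Pos q \in B r].
Local Notation R1 := [set r in NF P | Neg q \in B r].
Local Notation R2 := [set r in NF P | (NN q \in B r) && (q \notin H r)].
Local Notation R3 := [set r in NF P | (NN q \in B r) && (q \in H r)].
Local Notation R4 := [set r in NF P | (NN q \notin B r) && (q \in H r)].
Local Notation R14 := (R1 :|: R4).
Local Notation R02 := (R0 :|: R2).

Lemma in_class (c : pred (rule A)) r : (r \in [set r in NF P | c r]) = (r \in NF P) && c r.
Proof. exact: in_set. Qed.

Lemma NF_sat r : r \in NF P -> sat Y r.
Proof. by move=> rP; apply: (forall_inP Y_model); rewrite inE rP. Qed.

Lemma q_notin_Y' : q \notin Y'.
Proof. by rewrite !inE eqxx. Qed.

Lemma head_R14 r : q \notin Y -> r \in R14 -> body_sat Y' Y' (Bq q r) ->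
  ~~ [disjoint Hq q r & Y'].
Proof.
move=> qY rR; rewrite body_sat_Bq_D1 (setD1_id qY) disjoint_Hq // => sat_Bq.
have rP : r \in NF P by case/setUP: rR; rewrite inE => /andP[].
have [H_Pos Pos_Neg NN_Neg] := nontautological_lits q (NF_nontautological rP).
have [nPos nNN] : Pos q \notin B r /\ NN q \notin B r.
  case/setUP: rR; rewrite inE => /andP[_ ]; last by case/andP=> nNN /H_Pos.
  by move=> Neg_q; rewrite (contraL Pos_Neg Neg_q) (contraL NN_Neg Neg_q).
have sat_B := body_sat_Bq_out qY nPos nNN sat_Bq.
by move: (NF_sat rP); rewrite satE sat_B.
Qed.

Lemma head_R02 r : q \in Y -> r \in R02 -> body_sat Y' Y' (Bq q r) ->
  ~~ [disjoint H r & Y'].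
Proof.
move=> qY rR; rewrite body_sat_Bq_D1 => sat_Bq.
have rP : r \in NF P by case/setUP: rR; rewrite inE => /andP[].
have [H_Pos Pos_Neg NN_Neg] := nontautological_lits q (NF_nontautological rP).
have [nNeg qH] : Neg q \notin B r /\ q \notin H r.
  case/setUP: rR; rewrite inE => /andP[_ ]; last by case/andP => /NN_Neg.
  by move=> Pos_q; rewrite (Pos_Neg Pos_q) (contraL H_Pos Pos_q).
have sat_B := body_sat_Bq_in qY nNeg sat_Bq.
by move: (NF_sat rP); rewrite satE sat_B disjointD1r.
Qed.

Lemma q_support : q \in Y ->
  exists2 t, t \in R3 :|: R4 & body_sat Y Y (B t) && [disjoint Hq q t & Y'].
Proof.
move=> qY; have [r rPR viol] := Y_minimal (properD1 qY).
have [a aH] := violates_sat (subD1set Y q) viol (forall_inP Y_model r rPR).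
rewrite setDDr setDv set0U => /setIP[_ /set1P e]; subst a.
have rP : r \in NF P by case/setUP: rPR => // /R_q_free; rewrite inE aH.
case/andP: viol => sat_B disj; exists r.
  by apply/setUP; case: (boolP (NN q \in B r)) => nn; [left | right]; rewrite inE rP nn aH.
by rewrite (body_satW (subD1set Y q) sat_B) disjoint_Hq // q_notin_Y'.
Qed.

Lemma body_sat_R4 X r :
  q \in Y -> r \in R4 -> body_sat X Y (B r) -> body_sat (X :\ q) Y' (B r).
Proof.
rewrite inE => qY /and3P[rP nNN qH] sat_B; rewrite body_sat_D1 // => -[[a|a]|a] lB /=.
- by apply: contraTneq lB => ->; case: (nontautological_lits q (NF_nontautological rP)) => /(_ qH).
- apply: contraTneq lB => ->; move/body_satP: sat_B => /(_ (Neg q)) /=.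
  by rewrite qY => /contraL; apply.
- by apply: contraTneq lB => ->.
Qed.

Lemma Dq_R02 r : q \in Y -> exists2 D, D \in Dq q (R02 :\ r) & body_sat Y' Y' D.
Proof.
move=> qY; apply: Dq_satisfiable => r' /setD1P[_ r'R].
by case: (boolP (body_sat _ _ _)) => //= /(head_R02 qY r'R); rewrite disjoint_Hq // q_notin_Y'.
Qed.

Lemma sat_1a r0 r4 : r0 \in R0 -> r4 \in R4 -> sat Y' (H r0 :|: Hq q r4, Bq q r0 :|: B r4).
Proof.
move=> r0R r4R; rewrite satE /B /H /= body_satU disjointsU negb_and.
apply/implyP => /andP[sat0 sat4]; case: (boolP (q \in Y)) => qY.
  by rewrite head_R02 // in_setU r0R.
have r4R' : r4 \in R14 by rewrite in_setU r4R orbT.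
by rewrite (head_R14 qY r4R' (body_satS (Bq_sub _ _) sat4)) orbT.
Qed.

Lemma sat_2a r0 r3 r' : r0 \in R0 -> r' \in R14 ->
  sat Y' (H r0 :|: Hq q r3, Bq q r0 :|: Bq q r3 :|: notA (Hq q r') :|: nnS (Bq q r')).
Proof.
move=> r0R r'R; rewrite satE /B /H /= !body_satU body_sat_notA body_sat_nnS disjointsU negb_and.
apply/implyP => /andP[/andP[/andP[sat0 _] disj] sat']; case: (boolP (q \in Y)) => qY.
  by rewrite head_R02 // in_setU r0R.
by move: (head_R14 qY r'R sat'); rewrite disj.
Qed.

Lemma sat_1b r2 r4 : r2 \in R2 -> r4 \in R4 ->
  sat Y' (H r2, Bq q r2 :|: notA (Hq q r4) :|: nnS (B r4)).
Proof.
move=> r2R r4R; rewrite satE /B /H /= !body_satU body_sat_notA body_sat_nnS.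
apply/implyP => /andP[/andP[sat2 disj] sat4]; case: (boolP (q \in Y)) => qY.
  by rewrite head_R02 // in_setU r2R orbT.
have r4R' : r4 \in R14 by rewrite in_setU r4R orbT.
by move: (head_R14 qY r4R' (body_satS (Bq_sub _ _) sat4)); rewrite disj.
Qed.

Lemma sat_2b r2 r3 r' : r2 \in R2 -> r' \in R14 ->
  sat Y' (H r2, Bq q r2 :|: notA (Hq q r3 :|: Hq q r') :|: nnS (Bq q r3 :|: Bq q r')).
Proof.
move=> r2R r'R; rewrite satE /B /H /= !body_satU body_sat_notA body_sat_nnS body_satU disjointsU.
apply/implyP => /andP[/andP[sat2 /andP[_ disj]] /andP[_ sat']]; case: (boolP (q \in Y)) => qY.
  by rewrite head_R02 // in_setU r2R orbT.
by move: (head_R14 qY r'R sat'); rewrite disj.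
Qed.

Lemma sat_4 r' D : r' \in R14 -> D \in Dq q (R3 :|: R4) -> sat Y' (Hq q r', Bq q r' :|: D).
Proof.
move=> r'R DD; rewrite satE /B /H /= body_satU; apply/implyP => /andP[sat' satD].
case: (boolP (q \in Y)) => qY; last exact: head_R14.
have [t tR /andP[sat_t disj]] := q_support qY.
by move: (Dq_falsified tR (body_sat_forget q sat_t) disj DD); rewrite satD.
Qed.

Lemma sat_5 r' r3 r D : r' \in R14 -> r \in R02 ->
  sat Y' (Hq q r', Bq q r' :|: notA (H r :|: Hq q r3) :|: nnS (Bq q r :|: Bq q r3) :|: D).
Proof.
move=> r'R rR; rewrite satE /B /H /= !body_satU body_sat_notA body_sat_nnS body_satU disjointsU.
apply/implyP => /andP[/andP[/andP[sat' /andP[disj _]] /andP[satr _]] _].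
case: (boolP (q \in Y)) => qY; last exact: head_R14.
by move: (head_R02 qY rR satr); rewrite disj.
Qed.

Lemma Ppp_sound x : x \in Ppp q P -> sat Y' x.
Proof.
rewrite inE /Ppp_mem; case/or4P => [| | |/or4P[| | |/or4P[| | |/orP[|]]]].
- by rewrite inE => /andP[xP qx]; apply: sat_D1 qx (NF_sat xP).
- by case/exists_inP => r0 r0R /exists_inP[r4 r4R /eqP->]; apply: sat_1a.
- by case/exists_inP => r0 r0R /exists_inP[r3 _ /exists_inP[r' r'R /eqP->]]; apply: sat_2a.
- case/exists_inP => r0 _ /exists_inP[r3 _ /exists_inP[h hH /exists_inP[D _ /eqP->]]].
  by apply: (@sat_NN_head _ _ _ h); rewrite //= !in_setU set11 orbT.
- by case/exists_inP => r2 r2R /exists_inP[r4 r4R /eqP->]; apply: sat_1b.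
- by case/exists_inP => r2 r2R /exists_inP[r3 _ /exists_inP[r' r'R /eqP->]]; apply: sat_2b.
- case/exists_inP => r2 _ /exists_inP[r3 _ /exists_inP[h hH /exists_inP[D _ /eqP->]]].
  by apply: (@sat_NN_head _ _ _ h); rewrite //= !in_setU NN_in_nnS ?orbT // in_setU set11 orbT.
- by case/exists_inP => r' r'R /exists_inP[D DD /andP[_ /eqP->]]; apply: sat_4.
- case/exists_inP => r' r'R /exists_inP[r3 _ /exists_inP[r rR /exists_inP[D _ /andP[_ /eqP->]]]].
  exact: sat_5.
- case/exists_inP => r' _ /exists_inP[r3 _ /exists_inP[h hH /exists_inP[D _ /eqP->]]].
  by apply: (@sat_NN_head _ _ _ h); rewrite //= !in_setU NN_in_nnS ?orbT // in_setU set11 orbT.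
case/exists_inP => r0 _ /exists_inP[r3 _ /exists_inP[r3' _ /exists_inP[D _ /exists_inP[h hH]]]].
case/andP => _ /eqP->; apply: (@sat_NN_head _ _ _ h).
  by rewrite /= in_setU hH.
by rewrite /= !in_setU NN_in_nnS ?orbT // in_setU set11 orbT.
Qed.

Ltac exists_in w := apply/exists_inP; exists w => //.

Lemma mem_R r : r \in NF P -> q \notin sig_rule r -> r \in Ppp q P.
Proof. by move=> rP qr; rewrite inE /Ppp_mem inE rP qr. Qed.

Lemma mem_1a r0 r4 : r0 \in R0 -> r4 \in R4 -> (H r0 :|: Hq q r4, Bq q r0 :|: B r4) \in Ppp q P.
Proof.
move=> r0R r4R; rewrite inE /Ppp_mem; do 1 (apply/orP; right); apply/orP; left.
by exists_in r0; exists_in r4.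
Qed.

Lemma mem_2a r0 r3 r' : r0 \in R0 -> r3 \in R3 -> r' \in R14 ->
  (H r0 :|: Hq q r3, Bq q r0 :|: Bq q r3 :|: notA (Hq q r') :|: nnS (Bq q r')) \in Ppp q P.
Proof.
move=> r0R r3R r'R; rewrite inE /Ppp_mem; do 2 (apply/orP; right); apply/orP; left.
by exists_in r0; exists_in r3; exists_in r'.
Qed.

Lemma mem_3a r0 r3 h D : r0 \in R0 -> r3 \in R3 -> h \in H r0 -> D \in Dq q (R02 :\ r0) ->
  (H r0, Bq q r0 :|: [set NN h] :|: D :|: Bq q r3 :|: notA (Hq q r3)) \in Ppp q P.
Proof.
move=> r0R r3R hH DD; rewrite inE /Ppp_mem; do 3 (apply/orP; right); apply/orP; left.
by exists_in r0; exists_in r3; exists_in h; exists_in D.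
Qed.

Lemma mem_1b r2 r4 : r2 \in R2 -> r4 \in R4 ->
  (H r2, Bq q r2 :|: notA (Hq q r4) :|: nnS (B r4)) \in Ppp q P.
Proof.
move=> r2R r4R; rewrite inE /Ppp_mem; do 4 (apply/orP; right); apply/orP; left.
by exists_in r2; exists_in r4.
Qed.

Lemma mem_3b r2 r3 h D : r2 \in R2 -> r3 \in R3 -> h \in H r2 -> D \in Dq q (R02 :\ r2) ->
  (H r2, Bq q r2 :|: notA (Hq q r3) :|: nnS (Bq q r3 :|: [set Pos h]) :|: D) \in Ppp q P.
Proof.
move=> r2R r3R hH DD; rewrite inE /Ppp_mem; do 6 (apply/orP; right); apply/orP; left.
by exists_in r2; exists_in r3; exists_in h; exists_in D.
Qed.

Lemma mem_4 r' D : r' \in R14 -> D \in Dq q (R3 :|: R4) -> D :&: notS (Bq q r') == set0 ->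
  (Hq q r', Bq q r' :|: D) \in Ppp q P.
Proof.
move=> r'R DD disj; rewrite inE /Ppp_mem; do 7 (apply/orP; right); apply/orP; left.
by exists_in r'; exists_in D; rewrite disj /=.
Qed.

Lemma mem_6 r' r3 h D : r' \in R14 -> r3 \in R3 -> h \in Hq q r' -> D \in Dq q (R14 :\ r') ->
  (Hq q r', Bq q r' :|: notA (Hq q r3) :|: nnS (Bq q r3 :|: [set Pos h]) :|: D) \in Ppp q P.
Proof.
move=> r'R r3R hH DD; rewrite inE /Ppp_mem; do 9 (apply/orP; right); apply/orP; left.
by exists_in r'; exists_in r3; exists_in h; exists_in D.
Qed.

Lemma mem_7 r0 r3 r3' D h : r0 \in R0 -> r3 \in R3 -> r3' \in R3 -> r3 != r3' ->
  D \in Dq q (R02 :\ r0) -> h \in H r0 ->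
  (H r0 :|: Hq q r3,
   Bq q r0 :|: Bq q r3 :|: notA (Hq q r3') :|: nnS (Bq q r3' :|: [set Pos h]) :|: D) \in Ppp q P.
Proof.
move=> r0R r3R r3'R r3r3' DD hH; rewrite inE /Ppp_mem; do 10 (apply/orP; right).
by exists_in r0; exists_in r3; exists_in r3'; exists_in D; exists_in h; rewrite r3r3' /=.
Qed.

Lemma violated_rule_mentioning_q X Z : Z \proper Y -> Z :\ q = X ->
  (exists2 x, x \in Ppp q P :|: R & violates X Y' x) \/
  (exists2 r, r \in NF P & (q \in sig_rule r) && violates Z Y r).
Proof.
move=> ZY <-; have [r rPR viol] := Y_minimal ZY.
case/setUP: rPR => [rP | rR].
  case: (boolP (q \in sig_rule r)) => qr; first by right; exists r; rewrite // qr.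
  by left; exists r; rewrite ?in_setU ?mem_R ?violates_D1.
by left; exists r; rewrite ?in_setU ?rR ?orbT // violates_D1 // R_q_free.
Qed.

Lemma Ppp_violated_R14 X r : q \notin Y -> X \subset Y' -> r \in R14 ->
  violates X Y' (forget_rule q r) -> exists2 x, x \in Ppp q P & violates X Y' x.
Proof.
move=> qY XY' rR /andP[/= sat_Bq disj].
have /not_disjointP[h hH hY'] := head_R14 qY rR (body_satW XY' sat_Bq).
have R14_choice r2 : r2 \in R14 -> ~~ body_sat Y' Y' (Bq q r2) || ~~ [disjoint Hq q r2 & Y'].
  by move=> r2R; case: (boolP (body_sat _ _ _)) => //= /(head_R14 qY r2R).
(* Shape (4) needs a true choice in [D] for every rule of R3; a rule of R3 admitting none
   is used in shape (6) instead. *)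
pose candidate t := [&& t \in R3, body_sat Y' Y' (Bq q t) & [disjoint Hq q t & Y']].
case: (pickP candidate) => [t /and3P[tR sat_t disj_t] | no_candidate].
  have [D DD sat_D] : exists2 D, D \in Dq q (R14 :\ r) & body_sat Y' Y' D.
    by apply: Dq_satisfiable => r2 /setD1P[_ /R14_choice].
  exists (Hq q r, Bq q r :|: notA (Hq q t) :|: nnS (Bq q t :|: [set Pos h]) :|: D).
    exact: mem_6.
  rewrite /violates /= !body_satU body_sat_notA body_sat_nnS body_satU body_sat1 /=.
  by rewrite (Dq_body_sat _ _ DD) sat_Bq disj_t sat_t hY' sat_D disj.
have [D DD sat_D] : exists2 D, D \in Dq q (R3 :|: R4) & body_sat Y' Y' D.
  apply: Dq_satisfiable => r2 /setUP[r2R | r2R].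
    by move: (no_candidate r2); rewrite /candidate r2R /= => /negbT; rewrite negb_and.
  by apply: R14_choice; rewrite in_setU r2R orbT.
exists (Hq q r, Bq q r :|: D).
  by apply: mem_4 => //; apply: body_sat_notS_disjoint sat_D (body_satW XY' sat_Bq).
by rewrite /violates /= body_satU (Dq_body_sat _ _ DD) sat_Bq sat_D disj.
Qed.

Lemma forget_minimal_q_notin X : q \notin Y -> X \proper Y' ->
  exists2 x, x \in Ppp q P :|: R & violates X Y' x.
Proof.
move=> qY XY'; have qX : q \notin X := contraNN (subsetP (proper_sub XY') q) q_notin_Y'.
have XY : X \proper Y := proper_sub_trans XY' (subD1set Y q).
case: (violated_rule_mentioning_q XY (setD1_id qX)) => [// | [r rP /andP[qr viol]]].
have rR : r \in R14.
  move: viol => /andP[/body_satP sat_B _].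
  have nPos : Pos q \notin B r by apply/negP => /sat_B /=; rewrite (negbTE qX).
  have nNN : NN q \notin B r by apply/negP => /sat_B /=; rewrite (negbTE qY).
  rewrite in_setU !in_class rP nNN /=.
  case/sig_rule_q: qr => [-> | Pos_q | -> // | NN_q].
  - by rewrite orbT.
  - by rewrite Pos_q in nPos.
  - by rewrite NN_q in nNN.
have violr : violates X Y' (forget_rule q r) by move: (violates_forget q viol); rewrite setD1_id.
have [x xP violx] := Ppp_violated_R14 qY (proper_sub XY') rR violr.
by exists x; rewrite // in_setU xP.
Qed.

Lemma Ppp_violated_R2 X r2 : q \in Y -> X \subset Y' -> r2 \in R2 ->
  violates X Y' (forget_rule q r2) -> exists2 x, x \in Ppp q P & violates X Y' x.
Proof.
move=> qY XY' r2R /andP[/= sat_Bq disj].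
have r2R' : r2 \in R02 by rewrite in_setU r2R orbT.
have qH : q \notin H r2 by move: r2R; rewrite in_class => /and3P[].
rewrite /Hq setD1_id // in disj.
have [t tR /andP[sat_t disj_t]] := q_support qY.
case/setUP: tR => tR.
  have /not_disjointP[h hH hY'] := head_R02 qY r2R' (body_satW XY' sat_Bq).
  have [D DD sat_D] := Dq_R02 r2 qY.
  exists (H r2, Bq q r2 :|: notA (Hq q t) :|: nnS (Bq q t :|: [set Pos h]) :|: D).
    exact: mem_3b.
  rewrite /violates /= !body_satU body_sat_notA body_sat_nnS body_satU body_sat1 /=.
  by rewrite (Dq_body_sat _ _ DD) sat_Bq disj_t (body_sat_forget q sat_t) hY' sat_D disj.
exists (H r2, Bq q r2 :|: notA (Hq q t) :|: nnS (B t)); first exact: mem_1b.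
rewrite /violates /= !body_satU body_sat_notA body_sat_nnS.
by rewrite sat_Bq disj_t (body_sat_R4 qY tR sat_t) disj.
Qed.

Lemma Ppp_violated_R0 X r s : q \in Y -> X \subset Y' -> r \in R0 -> s \in R3 :|: R4 ->
  violates X Y' (forget_rule q r) -> violates X Y s ->
  exists2 x, x \in Ppp q P & violates X Y' x.
Proof.
move=> qY XY' rR sR /andP[/= sat_Bq disj] viol_s.
have qX : q \notin X := contraNN (subsetP XY' q) q_notin_Y'.
have rR' : r \in R02 by rewrite in_setU rR.
have qH : q \notin H r.
  move: rR; rewrite in_class => /andP[rP]; apply: contraL.
  by case: (nontautological_lits q (NF_nontautological rP)).
rewrite /Hq setD1_id // in disj.
have /andP[/= sat_Bqs disj_s] := violates_forget q viol_s.
rewrite setD1_id // in sat_Bqs disj_s.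
have disj_rs : [disjoint H r :|: Hq q s & X] by rewrite disjointsU disj disj_s.
have /not_disjointP[h hH hY'] := head_R02 qY rR' (body_satW XY' sat_Bq).
have [D DD sat_D] := Dq_R02 r qY.
have [t tR /andP[sat_t disj_t]] := q_support qY.
have sat_Bqt := body_sat_forget q sat_t.
case/setUP: sR => sR; last first.
  exists (H r :|: Hq q s, Bq q r :|: B s); first exact: mem_1a.
  move: viol_s => /andP[/(body_sat_R4 qY sR) sat_Bs _].
  by rewrite /violates /= body_satU sat_Bq -(setD1_id qX) sat_Bs setD1_id.
case/setUP: tR => tR.
  case: (eqVneq s t) => [est | st]; first subst t.
    exists (H r, Bq q r :|: [set NN h] :|: D :|: Bq q s :|: notA (Hq q s)).
      exact: mem_3a.
    rewrite /violates /= !body_satU body_sat1 /= body_sat_notA (Dq_body_sat _ _ DD).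
    by rewrite sat_Bq hY' sat_D sat_Bqs disj_t disj.
  exists (H r :|: Hq q s,
          Bq q r :|: Bq q s :|: notA (Hq q t) :|: nnS (Bq q t :|: [set Pos h]) :|: D).
    exact: mem_7.
  rewrite /violates /= !body_satU body_sat_notA body_sat_nnS body_satU body_sat1 /=.
  by rewrite (Dq_body_sat _ _ DD) sat_Bq sat_Bqs disj_t sat_Bqt hY' sat_D disj_rs.
exists (H r :|: Hq q s, Bq q r :|: Bq q s :|: notA (Hq q t) :|: nnS (Bq q t)).
  by apply: mem_2a; rewrite // in_setU tR orbT.
rewrite /violates /= !body_satU body_sat_notA body_sat_nnS.
by rewrite sat_Bq sat_Bqs disj_t sat_Bqt disj_rs.
Qed.

Lemma Ppp_violated_pair X r s : q \in Y -> X \subset Y' ->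
  r \in NF P -> q \in sig_rule r -> violates (q |: X) Y r ->
  s \in NF P -> q \in sig_rule s -> violates X Y s ->
  exists2 x, x \in Ppp q P & violates X Y' x.
Proof.
move=> qY XY' rP qr viol_r sP qs viol_s.
have qX : q \notin X := contraNN (subsetP XY' q) q_notin_Y'.
have viol_r' : violates X Y' (forget_rule q r).
  by move: (violates_forget q viol_r); rewrite setU1K.
have viol_s' : violates X Y' (forget_rule q s).
  by move: (violates_forget q viol_s); rewrite setD1_id.
have [rR0 | rR2] : r \in R0 \/ r \in R2; last exact: Ppp_violated_R2 rR2 viol_r'.
  move: viol_r => /andP[/body_satP sat_B disj]; rewrite !in_class rP /=.
  have qH : q \notin H r by rewrite (disjointFl disj) ?setU11.
  case/sig_rule_q: qr => [qH' | -> | /sat_B /= | ->]; [| by left | | by right].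
  - by rewrite qH' in qH.
  - by rewrite qY.
have [sR2 | sR34] : s \in R2 \/ s \in R3 :|: R4;
  [| exact: Ppp_violated_R2 sR2 viol_s' | exact: Ppp_violated_R0 rR0 sR34 viol_r' viol_s].
  move: viol_s => /andP[/body_satP sat_B _]; rewrite in_setU !in_class sP /=.
  case: (boolP (NN q \in B s)) => NN_q; case: (boolP (q \in H s)) => qH /=;
    [by right | by left | by right | ].
  case/sig_rule_q: qs => [| /sat_B /= | /sat_B /= |]; rewrite ?(negbTE qX) ?qY //.
  - by rewrite (negbTE qH).
  - by rewrite (negbTE NN_q).
Qed.

Lemma forget_minimal_q_in X : q \in Y -> X \proper Y' ->
  exists2 x, x \in Ppp q P :|: R & violates X Y' x.
Proof.
move=> qY XY'; have XY'_sub := proper_sub XY'.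
have qX : q \notin X := contraNN (subsetP XY'_sub q) q_notin_Y'.
have XY : X \proper Y := proper_sub_trans XY' (subD1set Y q).
have qXY : q |: X \proper Y.
  case/properP: XY' => _ [a /setD1P[aq aY] aX]; apply/properP; split.
    by rewrite subUset sub1set qY (proper_sub XY).
  by exists a; rewrite // !inE negb_or aq.
case: (violated_rule_mentioning_q qXY (setU1K qX)) => [// | [r rP /andP[qr viol_r]]].
case: (violated_rule_mentioning_q XY (setD1_id qX)) => [// | [s sP /andP[qs viol_s]]].
have [x xP violx] := Ppp_violated_pair qY XY'_sub rP qr viol_r sP qs viol_s.
by exists x; rewrite // in_setU xP.
Qed.

Lemma forget_sat : satP Y' (Ppp q P :|: R).
Proof.
rewrite satPU; apply/andP; split; apply/forall_inP => x xQ; first exact: Ppp_sound.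
by apply: sat_D1 (R_q_free xQ) _; apply: (forall_inP Y_model); rewrite in_setU xQ orbT.
Qed.

Lemma forget_minimal : reduct_minimal (Ppp q P :|: R) Y'.
Proof.
move=> X; case: (boolP (q \in Y)) => qY; first exact: forget_minimal_q_in.
exact: forget_minimal_q_notin.
Qed.

End ForgettingAnswerSet.

Theorem theorem3 (A : finType) (P : {set rule A}) (q : A) :
  forall R : {set rule A}, q \notin sig_prog R ->
  forall Y : {set A}, answer_set (P :|: R) Y ->
    answer_set (f_SP P q :|: R) (Y :\ q).
Proof.
move=> R qR Y /answer_setP[Y_model Y_minimal].
have R_q_free : {in R, forall r, q \notin sig_rule r}.
  by move=> r rR; apply: contra qR => qr; apply/bigcupP; exists r.
have NF_model := satP_NFU Y_model; have NF_minimal := reduct_minimal_NF Y_minimal.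
apply/answer_setP; split; [apply: satP_NFU | apply: reduct_minimal_NF].
  exact: forget_sat NF_model NF_minimal R_q_free.
exact: forget_minimal NF_model NF_minimal R_q_free.
Qed.
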